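(* Let $\mathcal{A}$ be an infinite set. There exists a continuous locally finite-dimensional map $\eta:\mathfrak{S}(\mathcal{A})\to\boldsymbol{\Sigma}(\mathcal{A})$ such that $\overline{\operatorname{car}_\eta}^*(y)\subseteq\operatorname{car}(y)$ for every $y\in\mathfrak{S}(\mathcal{A})$. Consequently, if $X$ is a space and $\xi:X\to\mathfrak{S}(\mathcal{A})$ is continuous, then $\eta\circ\xi:X\to\boldsymbol{\Sigma}(\mathcal{A})$ is a continuous locally finite-dimensional map with $\overline{\operatorname{car}_{\eta\circ\xi}}^*(p)\subseteq\operatorname{car}_\xi(p)$ for every $p\in X$.
   Context: $\ell_1(\mathcal{A})$ is the Banach space of all $y:\mathcal{A}\to\mathbb{R}$ with $\|y\|_1=\sum_{\alpha}|y(\alpha)|<\infty$; $\mathbf{c}_{00}(\mathcal{A})\subseteq\ell_1(\mathcal{A})$ is the subspace of finitely supported functions. $\mathfrak{S}(\mathcal{A})=\{y\in\ell_1(\mathcal{A}): y(\alpha)\ge0\ \forall\alpha,\ \|y\|_1=1\}$ and $\boldsymbol{\Sigma}(\mathcal{A})=\mathfrak{S}(\mathcal{A})\cap\mathbf{c}_{00}(\mathcal{A})$, both with the $\|\cdot\|_1$-norm topology. $\operatorname{car}(y)=\{\alpha: y(\alpha)\neq0\}$; for a map $\zeta$ into $\mathbb{R}^{\mathcal{A}}$, $\operatorname{car}_\zeta(x)=\operatorname{car}(\zeta[x])$, where $\zeta[x]$ is the value at $x$. A map into a vector space is locally finite-dimensional if every point has an open neighbourhood mapped into a finite-dimensional linear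 subspace. For a cover $\Omega:Z\rightrightarrows\mathcal{A}$ of a space $Z$ (a map assigning nonempty subsets of $\mathcal{A}$), $\overline{\Omega}^*(p)=\bigcap\{\bigcup_{z\in U}\Omega(z): U\subseteq Z \text{ open}, p\in U\}$; equivalently $(\overline{\Omega}^* )^{-1}(\alpha)$ is the closure of $\Omega^{-1}(\alpha)=\{z:\alpha\in\Omega(z)\}$. *)

From HB Require Import structures.
From mathcomp Require Import all_boot all_order all_algebra.
From mathcomp Require Import all_classical all_reals topology.
From Stdlib Require List.
Set Implicit Arguments. Unset Strict Implicit. Unset Printing Implicit Defensive.
Import Order.TTheory GRing.Theory Num.Theory.
Local Open Scope ring_scope.
Local Open Scope classical_set_scope.

Section L1.
Variables (R : realType) (A : Type).
Implicit Types (y z : A -> R) (r d : R).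

Definition psum y (l : seq A) : R := \sum_(a <- l) `|y a|.

(* ||y||_1 <= r : every finite partial sum (over distinct indices) is <= r *)
Definition l1_le y r : Prop :=
  forall l : seq A, List.NoDup l -> psum y l <= r.

(* ||y||_1 < d  (sup of partial sums < d iff some r < d bounds them) *)
Definition l1_lt y d : Prop := exists2 r, r < d & l1_le y r.

Definition in_l1 y : Prop := exists r, l1_le y r.

(* ||y||_1 = 1 for nonnegative y, i.e. sup of partial sums equals 1 *)
Definition in_simplex y : Prop :=
  [/\ forall a, 0 <= y a,
      l1_le y 1 &
      forall e, 0 < e -> exists2 l : seq A, List.NoDup l & 1 - e < psum y l].

Definition fin_supp y : Prop :=
  exists l : seq A, forall a, y a != 0 -> List.In a l.

Definition in_Sigma y : Prop := in_simplex y /\ fin_supp y.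

Definition car y : set A := [set a | y a != 0].

Definition vsub y z : A -> R := fun a => y a - z a.

Definition in_fin_dim (W : set (A -> R)) : Prop :=
  exists (n : nat) (B : 'I_n -> (A -> R)),
    forall w, W w -> exists c : 'I_n -> R,
      forall a, w a = \sum_(i < n) c i * B i a.

Definition Sball y d : set (A -> R) :=
  [set z | in_simplex z /\ l1_lt (vsub z y) d].

Definition S_continuous (f : (A -> R) -> (A -> R)) : Prop :=
  forall y, in_simplex y -> forall e, 0 < e ->
    exists2 d, 0 < d & forall z, Sball y d z -> l1_lt (vsub (f z) (f y)) e.

Definition S_loc_fin_dim (f : (A -> R) -> (A -> R)) : Prop :=
  forall y, in_simplex y -> exists2 d, 0 < d & in_fin_dim (f @` Sball y d).

Definition S_car_closure (f : (A -> R) -> (A -> R)) y : set A :=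
  [set a | forall d, 0 < d -> exists2 z, Sball y d z & f z a != 0].

Definition X_continuous (X : topologicalType) (g : X -> (A -> R)) : Prop :=
  forall p : X, forall e, 0 < e ->
    exists U : set X, [/\ open U, U p &
      forall q, U q -> l1_lt (vsub (g q) (g p)) e].

Definition X_loc_fin_dim (X : topologicalType) (g : X -> (A -> R)) : Prop :=
  forall p : X, exists U : set X, [/\ open U, U p & in_fin_dim (g @` U)].

Definition X_car_closure (X : topologicalType) (g : X -> (A -> R)) (p : X)
  : set A :=
  [set a | forall U : set X, open U -> U p -> exists2 q, U q & g q a != 0].

End L1.

From HB Require Import structures.
From mathcomp Require Import all_boot all_order all_algebra.
From mathcomp Require Import all_classical all_reals topology.
From mathcomp Require Import ring lra.
From Stdlib Require List.
Set Implicit Arguments. Unset Strict Implicit. Unset Printing Implicit Defensive.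
Import Order.TTheory GRing.Theory Num.Theory.
Local Open Scope ring_scope.
Local Open Scope classical_set_scope.

(* For [y] in the simplex let [s] be the supremum of its coordinates and cut
   [y] at height [s/2]: [w = (y - s/2)^+] and [eta y = w / ||w||_1].  Only
   finitely many coordinates of [y] exceed [s/4], since each carries mass more
   than [s/4] out of a total mass [1]; on the ball of radius [s/4] around [y]
   the support of [w] stays among these coordinates, which gives local finite
   dimensionality and [car_eta^* y ⊆ car y].  The supremum is 1-Lipschitz for
   the sup-distance, which is dominated by the l1-distance, so on that ball [w]
   moves in l1 by at most a constant (proportional to the number of those
   coordinates) times the distance, while [||w||_1] stays above [s/8]; hence
   [eta] is continuous. *)

Section Retraction.
Variables (R : realType) (A : Type).
Implicit Types (f g h y z : A -> R) (l F : seq A).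

Lemma psum_nil f : psum f [::] = 0.
Proof. by rewrite /psum big_nil. Qed.

Lemma psum_cons f a l : psum f (a :: l) = `|f a| + psum f l.
Proof. by rewrite /psum big_cons. Qed.

Lemma NoDup1 (a : A) : List.NoDup [:: a].
Proof. exact: List.NoDup_cons (@List.in_nil _ a) (List.NoDup_nil _). Qed.

Lemma l1_le_coord f r a : l1_le f r -> `|f a| <= r.
Proof. by move=> /(_ _ (NoDup1 a)); rewrite psum_cons psum_nil addr0. Qed.

Lemma ler_psum f g l : (forall a, `|f a| <= `|g a|) -> psum f l <= psum g l.
Proof. by move=> fg; apply: ler_sum => a _. Qed.

Lemma psum_le_vsub f g l : psum f l <= psum g l + psum (vsub f g) l.
Proof.
rewrite /psum -big_split /=; apply: ler_sum => a _.
by rewrite /vsub -[X in `|X|](subrK (g a)) addrC ler_normD.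
Qed.

Lemma psum_vsubC f g l : psum (vsub f g) l = psum (vsub g f) l.
Proof. by apply: eq_bigr => a _; rewrite /vsub distrC. Qed.

Lemma psum_divr f c l : 0 < c -> psum (fun a => f a / c) l = psum f l / c.
Proof.
move=> c0; rewrite /psum mulr_suml; apply: eq_bigr => a _.
by rewrite normrM normfV (gtr0_norm c0).
Qed.

Lemma psum_ge_mul_size f c l : (forall a, List.In a l -> c <= `|f a|) ->
  c * (size l)%:R <= psum f l.
Proof.
elim: l => [|x l IH] cl; first by rewrite psum_nil mulr0.
rewrite psum_cons /= -addn1 natrD mulrDr mulr1.
have := cl x (or_introl erefl); have := IH (fun a ha => cl a (or_intror ha)).
lra.
Qed.

(* A sum over distinct indices sees each index of the support list [F] at
   most once. *)
Lemma psum_le_mul_size f b l F : List.NoDup l -> (forall a, `|f a| <= b) ->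
  (forall a, List.In a l -> f a != 0 -> List.In a F) ->
  psum f l <= b * (size F)%:R.
Proof.
move=> nd fb; elim: l nd F => [|x l IH] nd F lF.
  rewrite psum_nil; case: F {lF} => [|c F]; first by rewrite mulr0.
  by apply: mulr_ge0 => //; apply: le_trans (fb c).
have [nx ndl] : ~ List.In x l /\ List.NoDup l by inversion nd.
rewrite psum_cons; have [fx0|fx0] := eqVneq (f x) 0.
  by rewrite fx0 normr0 add0r; apply: IH => // a ha; apply: lF; right.
have [F1 [F2 eF]] := List.in_split _ _ (lF x (or_introl erefl) fx0).
have : psum f l <= b * (size (F1 ++ F2))%:R.
  apply: IH => // a ha fa; have := lF a (or_intror ha) fa; rewrite eF.
  case/(List.in_app_or F1 (x :: F2) a) => [h1|[h2|h2]]; apply: List.in_or_app.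
  - by left.
  - by subst a.
  - by right.
rewrite eF !size_cat /= addnS -addn1 !natrD !mulrDr mulr1.
have := fb x; lra.
Qed.

Definition l1_norm f := sup [set psum f l | l in [set l | List.NoDup l]].

Lemma l1_norm_has_sup f : in_l1 f ->
  has_sup [set psum f l | l in [set l | List.NoDup l]].
Proof.
case=> r fr; split; first by exists (psum f [::]); exists [::] => //; constructor.
by exists r => _ [l nd <-]; apply: fr.
Qed.

Lemma psum_le_l1_norm f l : in_l1 f -> List.NoDup l -> psum f l <= l1_norm f.
Proof.
by move=> f1 nd; apply: (sup_upper_bound (l1_norm_has_sup f1)); exists l.
Qed.

Lemma coord_le_l1_norm f a : in_l1 f -> `|f a| <= l1_norm f.
Proof.
move=> f1; have := psum_le_l1_norm f1 (NoDup1 a).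
by rewrite psum_cons psum_nil addr0.
Qed.

Lemma l1_norm_adherent f e : in_l1 f -> 0 < e ->
  exists2 l, List.NoDup l & l1_norm f - e < psum f l.
Proof.
move=> f1 e0; have [_ [l nd <-] ?] := sup_adherent e0 (l1_norm_has_sup f1).
by exists l.
Qed.

Lemma l1_norm_le_vsub f g L : in_l1 f -> in_l1 g ->
  (forall l, List.NoDup l -> psum (vsub g f) l <= L) ->
  l1_norm g <= l1_norm f + L.
Proof.
move=> f1 g1 gfL; apply: ge_sup; first by case: (l1_norm_has_sup g1).
move=> _ [l nd <-]; apply: le_trans (psum_le_vsub _ f l) _.
by apply: lerD; [apply: psum_le_l1_norm | apply: gfL].
Qed.

Lemma normalize_in_simplex f : (forall a, 0 <= f a) -> in_l1 f ->
  0 < l1_norm f -> in_simplex (fun a => f a / l1_norm f).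
Proof.
move=> f0 f1 N0; split.
- by move=> a; rewrite divr_ge0 ?f0 // ltW.
- move=> l nd; rewrite psum_divr // ler_pdivrMr // mul1r.
  exact: psum_le_l1_norm.
- move=> e e0; have [l nd fl] := l1_norm_adherent f1 (mulr_gt0 e0 N0).
  by exists l => //; rewrite psum_divr // ltr_pdivlMr // mulrBl mul1r.
Qed.

Lemma psum_vsub_normalize g h (G H L : R) l : 0 < G -> 0 < H ->
  psum h l <= H -> psum (vsub g h) l <= L -> `|G - H| <= L ->
  psum (vsub (fun a => g a / G) (fun a => h a / H)) l <= 2 * L / G.
Proof.
move=> G0 H0 hH ghL GHL; have GH0 : 0 < G * H by apply: mulr_gt0.
have coordE a : g a / G - h a / H
    = (g a - h a) * (1 / G) + h a * ((H - G) / (G * H)).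
  by field; apply/andP; split; apply: lt0r_neq0.
have coord_le a : `|g a / G - h a / H|
    <= `|g a - h a| * (1 / G) + `|h a| * (L / (G * H)).
  rewrite coordE; apply: le_trans (ler_normD _ _) _; apply: lerD.
    by rewrite normrM (ger0_norm (ltW (divr_gt0 ltr01 G0))).
  rewrite normrM; apply: ler_wpM2l => //.
  by rewrite normf_div (gtr0_norm GH0) ler_pM2r ?invr_gt0 // distrC.
rewrite /psum; apply: le_trans (ler_sum _ (fun a _ => coord_le a)) _.
rewrite big_split /= -!mulr_suml.
have L0 : 0 <= L by apply: le_trans GHL.
have -> : 2 * L / G = L * (1 / G) + H * (L / (G * H)).
  by field; apply/andP; split; apply: lt0r_neq0.
apply: lerD; apply: ler_wpM2r => //.
- by rewrite ltW // divr_gt0.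
- by rewrite divr_ge0 // ltW.
Qed.

Lemma in_fin_dim_subset (W1 W2 : set (A -> R)) :
  W1 `<=` W2 -> in_fin_dim W2 -> in_fin_dim W1.
Proof. by move=> W12 [n [B WB]]; exists n, B => w /W12; apply: WB. Qed.

Lemma in_fin_dim_supp F (W : set (A -> R)) :
  (forall w, W w -> forall a, w a != 0 -> List.In a F) -> in_fin_dim W.
Proof.
elim: F W => [|x F IH] W WF.
  exists 0%N, (fun _ _ => 0) => w Ww; exists (fun _ => 0) => a.
  by rewrite big_ord0; apply/eqP; apply: contrapT => /negP /(WF w Ww a).
pose drop_x (w : A -> R) a := if pselect (a = x) then 0 else w a.
have [n [B hB]] : in_fin_dim [set drop_x w | w in W].
  apply: IH => _ [w Ww <-] a; rewrite /drop_x.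
  case: (pselect (a = x)) => [_|nax] /=; first by rewrite eqxx.
  by move=> /(WF w Ww a) [ax|//]; case: nax.
exists n.+1, (fun i => if unlift ord0 i is Some j then B j
    else fun a => if pselect (a = x) then 1 else 0) => w Ww.
have [c hc] := hB (drop_x w) (ex_intro2 _ _ w Ww erefl).
exists (fun i => if unlift ord0 i is Some j then c j else w x) => a.
rewrite big_ord_recl unlift_none.
under eq_bigr => i _ do rewrite liftK.
rewrite -hc /drop_x; case: (pselect (a = x)) => [ax|_] /=.
  by rewrite ax mulr1 addr0.
by rewrite mulr0 add0r.
Qed.

Lemma Sball_coord y z d : Sball y d z -> forall a, `|z a - y a| <= d.
Proof.
by case=> _ [r rd zyr] a; apply: le_trans (ltW rd); apply: l1_le_coord zyr.
Qed.

Lemma simplex_le1 y a : in_simplex y -> y a <= 1.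
Proof. by case=> y0 y1 _; have := l1_le_coord a y1; rewrite ger0_norm. Qed.

Lemma simplex_exists_gt0 y : in_simplex y -> exists a, 0 < y a.
Proof.
move=> [y0 _ /(_ (1 / 2)) [|l _ yl]]; first lra.
apply: contrapT => /forallNP yle0.
suff : psum y l = 0 by lra.
rewrite /psum big1 // => a _; apply/normr0P; rewrite eq_le y0 andbT leNgt.
by apply/negP/yle0.
Qed.

(* Distinct coordinates above [c] carry mass [c] each out of a total [1]. *)
Lemma simplex_gt_finite y c : in_simplex y -> 0 < c ->
  exists F, forall a, c < y a -> List.In a F.
Proof.
move=> [y0 y1 _] c0; apply: contrapT => /forallNP noF.
have long n : exists l, [/\ List.NoDup l, size l = n &
    forall a, List.In a l -> c < y a].
  elim: n => [|n [l [nd sl lc]]]; first by exists [::]; split => //; constructor.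
  have /existsNP [a /not_implyP [ca nal]] := noF l.
  exists (a :: l); split => /=; [by constructor | by rewrite sl |].
  by move=> b [<-|bl]; [|apply: lc].
have [l [nd sl lc]] := long (Num.Def.archi_bound (1 / c)).
have := archi_boundP (ltW (divr_gt0 ltr01 c0)); rewrite -sl => lt_size.
have : c * (1 / c) < c * (size l)%:R by rewrite ltr_pM2l.
rewrite mulrA mulr1 divff ?gt_eqF // => gt1.
have := psum_ge_mul_size (fun a al => le_trans (ltW (lc a al)) (ler_norm (y a))).
have := y1 l nd; lra.
Qed.

Definition coord_sup y := sup (range y).

Lemma coord_sup_has_sup y : in_simplex y -> has_sup (range y).
Proof.
move=> ys; have [a _] := simplex_exists_gt0 ys; split; first by exists (y a), a.
by exists 1 => _ [b _ <-]; apply: simplex_le1.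
Qed.

Lemma coord_le_sup y a : in_simplex y -> y a <= coord_sup y.
Proof.
by move=> ys; apply: (sup_upper_bound (coord_sup_has_sup ys)); exists a.
Qed.

Lemma coord_sup_gt0 y : in_simplex y -> 0 < coord_sup y.
Proof.
move=> ys; have [a ya] := simplex_exists_gt0 ys.
exact: lt_le_trans ya (coord_le_sup a ys).
Qed.

Lemma coord_sup_adherent y e : in_simplex y -> 0 < e ->
  exists a, coord_sup y - e < y a.
Proof.
move=> ys e0; have [_ [a _ <-] ?] := sup_adherent e0 (coord_sup_has_sup ys).
by exists a.
Qed.

Lemma coord_sup_le y z d : in_simplex y -> in_simplex z ->
  (forall a, `|z a - y a| <= d) -> coord_sup z <= coord_sup y + d.
Proof.
move=> ys zs zyd; apply: ge_sup; first by case: (coord_sup_has_sup zs).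
move=> _ [a _ <-]; have := coord_le_sup a ys; have := zyd a.
by rewrite ler_norml; lra.
Qed.

Definition trunc (t : R) y a := if t < y a then y a - t else 0.

Lemma trunc_ge0 t y a : 0 <= trunc t y a.
Proof. by rewrite /trunc; case: ifP => // /ltW; lra. Qed.

Lemma trunc_le t y a : 0 <= t -> 0 <= y a -> trunc t y a <= y a.
Proof. by move=> t0 ya0; rewrite /trunc; case: ifP => _; lra. Qed.

Lemma trunc_neq0 t y a : trunc t y a != 0 -> t < y a.
Proof. by rewrite /trunc; case: ifP; rewrite ?eqxx. Qed.

Lemma trunc_lipschitz s t y z a :
  `|trunc s z a - trunc t y a| <= `|z a - y a| + `|s - t|.
Proof.
have shift_le : `|z a - s - (y a - t)| <= `|z a - y a| + `|s - t|.
  rewrite (_ : z a - s - (y a - t) = (z a - y a) + - (s - t)); last by ring.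
  by rewrite -(normrN (s - t)) ler_normD.
apply: le_trans shift_le; rewrite /trunc.
case: ifP => zs; case: ifP => yt; rewrite ?subr0 ?sub0r ?normrN //.
- move/negbT: yt; rewrite -leNgt => yt.
  rewrite ger0_norm; last lra.
  by rewrite real_ler_normr ?num_real //; apply/orP; left; lra.
- move/negbT: zs; rewrite -leNgt => zs.
  rewrite ger0_norm; last lra.
  by rewrite real_ler_normr ?num_real //; apply/orP; right; lra.
- by rewrite normr0.
Qed.

Definition level y := coord_sup y / 2.
Definition cut y := trunc (level y) y.
Definition eta_map y a := cut y a / l1_norm (cut y).

Lemma level_gt0 y : in_simplex y -> 0 < level y.
Proof. by move=> ys; have := coord_sup_gt0 ys; rewrite /level; lra. Qed.

Lemma half_level_gt0 y : in_simplex y -> 0 < level y / 2.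
Proof. by move=> /level_gt0; lra. Qed.

Lemma cut_in_l1 y : in_simplex y -> in_l1 (cut y).
Proof.
move=> ys; have [y0 y1 _] := ys; exists 1 => l nd.
apply: le_trans (y1 l nd); apply: ler_psum => a.
rewrite !ger0_norm ?trunc_ge0 ?y0 //.
by apply: trunc_le => //; apply: ltW; apply: level_gt0.
Qed.

Lemma l1_norm_cut_gt0 y : in_simplex y -> 0 < l1_norm (cut y).
Proof.
move=> ys; have [a ya] := coord_sup_adherent ys (level_gt0 ys).
apply: lt_le_trans (coord_le_l1_norm a (cut_in_l1 ys)).
have lya : level y < y a by move: ya; rewrite /level; lra.
by rewrite /cut /trunc lya gtr0_norm ?subr_gt0.
Qed.

Lemma eta_in_Sigma y : in_simplex y -> in_Sigma (eta_map y).
Proof.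
move=> ys; split.
  apply: normalize_in_simplex; first exact: trunc_ge0.
    exact: cut_in_l1.
  exact: l1_norm_cut_gt0.
have [F yF] := simplex_gt_finite ys (level_gt0 ys); exists F => a.
by rewrite /eta_map mulf_eq0 negb_or => /andP [/trunc_neq0 /yF].
Qed.

Section Near.
Variables (y z : A -> R) (d : R).
Hypotheses (ys : in_simplex y) (zs : in_simplex z).
Hypothesis zyd : forall a, `|z a - y a| <= d.
Hypothesis d_small : d <= level y / 4.

Lemma level_near : `|level z - level y| <= d / 2.
Proof.
have := coord_sup_le ys zs zyd.
have := coord_sup_le zs ys (fun a => ltac:(by rewrite distrC)).
by rewrite /level ler_norml; lra.
Qed.

Lemma cut_neq0_near a : cut z a != 0 -> level y / 2 < y a.
Proof.
move=> /trunc_neq0; have := d_small; have := level_near; have := zyd a.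
by have := level_gt0 ys; rewrite !ler_norml; lra.
Qed.

Lemma vsub_cut_neq0_near a : vsub (cut z) (cut y) a != 0 -> level y / 2 < y a.
Proof.
have [cz0|/cut_neq0_near //] := eqVneq (cut z a) 0.
by rewrite /vsub cz0 sub0r oppr_eq0 => /trunc_neq0; have := level_gt0 ys; lra.
Qed.

Lemma psum_vsub_cut_le F l : List.NoDup l ->
  (forall a, level y / 2 < y a -> List.In a F) ->
  psum (vsub (cut z) (cut y)) l <= 2 * d * (size F)%:R.
Proof.
move=> nd yF; apply: psum_le_mul_size => // [a|a _ /vsub_cut_neq0_near /yF //].
apply: le_trans (trunc_lipschitz _ _ _ _ _) _.
have := level_near; have := zyd a; have := normr_ge0 (z a - y a); lra.
Qed.

Lemma l1_norm_cut_near : level y / 8 <= l1_norm (cut z).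
Proof.
have [a ya] := coord_sup_adherent ys (half_level_gt0 ys).
apply: le_trans (coord_le_l1_norm a (cut_in_l1 zs)).
have sup_level : coord_sup y = 2 * level y by rewrite /level; field.
have := level_near; have := zyd a; rewrite !ler_norml sup_level in ya *.
move=> /andP [zya _] /andP [_ lz]; have := d_small; have := level_gt0 ys.
move=> ly0 dly; have lza : level z < z a by lra.
by rewrite /cut /trunc lza ger0_norm; lra.
Qed.

End Near.

Lemma eta_continuous : S_continuous eta_map.
Proof.
move=> y ys e e0; set t := level y; have t0 : 0 < t := level_gt0 ys.
have [F yF] := simplex_gt_finite ys (half_level_gt0 ys).
set N : R := (size F)%:R; have N0 : 0 <= N by [].
set d := Num.min (t / 4) (e * t / (64 * (N + 1))).
have d0 : 0 < d.
  rewrite lt_min; apply/andP; split; first lra.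
  by apply: divr_gt0; [exact: mulr_gt0 | lra].
have d_small : d <= t / 4 by rewrite ge_min lexx.
have d_e : d * (64 * (N + 1)) <= e * t.
  by rewrite -ler_pdivlMr ?ge_min ?lexx ?orbT //; lra.
exists d => // z zyd; have zs : in_simplex z by case: zyd.
have zyd' := Sball_coord zyd.
set L := 2 * d * N.
have cut_L l : List.NoDup l -> psum (vsub (cut z) (cut y)) l <= L.
  by move=> nd; apply: psum_vsub_cut_le.
have norm_L : `|l1_norm (cut z) - l1_norm (cut y)| <= L.
  have := l1_norm_le_vsub (cut_in_l1 ys) (cut_in_l1 zs) cut_L.
  have := l1_norm_le_vsub (cut_in_l1 zs) (cut_in_l1 ys)
    (fun l nd => ltac:(by rewrite psum_vsubC; apply: cut_L)).
  by rewrite ler_norml; lra.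
have cut_z := l1_norm_cut_near ys zs zyd' d_small.
(* Since [||cut z||_1 >= t/8], the normalisation bound [2 L / ||cut z||_1]
   is at most [32 d N / t < e/2]. *)
exists (e / 2); first lra.
move=> l nd; apply: le_trans (psum_vsub_normalize (l1_norm_cut_gt0 zs)
  (l1_norm_cut_gt0 ys) (psum_le_l1_norm (cut_in_l1 ys) nd) (cut_L l nd) norm_L) _.
rewrite ler_pdivrMr ?l1_norm_cut_gt0 //.
have : e * (t / 8) <= e * l1_norm (cut z) by rewrite ler_pM2l.
by rewrite /L; nra.
Qed.

Lemma eta_loc_fin_dim : S_loc_fin_dim eta_map.
Proof.
move=> y ys; have t0 := level_gt0 ys.
have [F yF] := simplex_gt_finite ys (half_level_gt0 ys).
exists (level y / 4); first lra.
apply: (in_fin_dim_supp (F := F)) => _ [z zyd <-] a.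
have zs : in_simplex z by case: zyd.
rewrite /eta_map mulf_eq0 negb_or => /andP [+ _].
by move=> /(cut_neq0_near ys zs (Sball_coord zyd) (lexx _)) /yF.
Qed.

Lemma eta_car_closure y : in_simplex y -> S_car_closure eta_map y `<=` car y.
Proof.
move=> ys a; have t0 := level_gt0 ys.
case/(_ (level y / 4) (ltac:(lra))) => z zyd.
have zs : in_simplex z by case: zyd.
rewrite /eta_map mulf_eq0 negb_or => /andP [+ _].
move=> /(cut_neq0_near ys zs (Sball_coord zyd) (lexx _)).
by rewrite /car /=; apply: contraTneq => ->; lra.
Qed.

End Retraction.

Section Composition.
Variables (R : realType) (A : Type) (X : topologicalType).
Variables (f : (A -> R) -> (A -> R)) (xi : X -> (A -> R)).
Hypothesis xi_simplex : forall p, in_simplex (xi p).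
Hypothesis xi_cont : X_continuous xi.

Lemma X_continuous_Sball p d : 0 < d ->
  exists U : set X, [/\ open U, U p & forall q, U q -> Sball (xi p) d (xi q)].
Proof.
move=> d0; have [U [oU Up xiU]] := xi_cont p d0.
by exists U; split => // q Uq; split; [exact: xi_simplex | exact: xiU].
Qed.

Lemma X_continuous_comp : S_continuous f -> X_continuous (f \o xi).
Proof.
move=> fc p e e0; have [d d0 fd] := fc _ (xi_simplex p) e e0.
have [U [oU Up xiU]] := X_continuous_Sball p d0.
by exists U; split => // q /xiU /fd.
Qed.

Lemma X_loc_fin_dim_comp : S_loc_fin_dim f -> X_loc_fin_dim (f \o xi).
Proof.
move=> ff p; have [d d0 fd] := ff _ (xi_simplex p).
have [U [oU Up xiU]] := X_continuous_Sball p d0.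
exists U; split => //; apply: in_fin_dim_subset fd.
by move=> _ [q Uq <-]; exists (xi q) => //; apply: xiU.
Qed.

Lemma X_car_closure_comp p :
  X_car_closure (f \o xi) p `<=` S_car_closure f (xi p).
Proof.
move=> a pa d d0; have [U [oU Up xiU]] := X_continuous_Sball p d0.
by have [q Uq fq] := pa U oU Up; exists (xi q) => //; apply: xiU.
Qed.

End Composition.

Theorem theorem3p1 (R : realType) (A : Type) (hA : infinite_set [set: A]) :
  exists eta : (A -> R) -> (A -> R),
    [/\ (forall y, in_simplex y -> in_Sigma (eta y)),
        S_continuous eta,
        S_loc_fin_dim eta,
        (forall y, in_simplex y -> S_car_closure eta y `<=` car y) &
        (forall (X : topologicalType) (xi : X -> (A -> R)),
           (forall p, in_simplex (xi p)) -> X_continuous xi ->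
           [/\ (forall p, in_Sigma (eta (xi p))),
               X_continuous (eta \o xi),
               X_loc_fin_dim (eta \o xi) &
               (forall p, X_car_closure (eta \o xi) p `<=` car (xi p))])].
Proof.
exists (@eta_map R A); split.
- exact: eta_in_Sigma.
- exact: eta_continuous.
- exact: eta_loc_fin_dim.
- exact: eta_car_closure.
move=> X xi xis xic; split.
- by move=> p; apply: eta_in_Sigma.
- exact: X_continuous_comp (@eta_continuous R A).
- exact: X_loc_fin_dim_comp (@eta_loc_fin_dim R A).
- move=> p a /(X_car_closure_comp xis xic).
  exact: eta_car_closure.
Qed.
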